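(* Let $A$ be a subring of a ring $B$ and assume that $B$, as a left $A$-module, has a resolution by finitely generated free $A$-modules. Then a $B$-module $M$ has a resolution by finitely generated free $B$-modules if and only if it has a resolution by finitely generated free $A$-modules.
   Context: All rings are associative with identity and modules are unitary left modules. A resolution of $M$ by finitely generated free modules is an exact sequence $\cdots\to F^{-1}\to F^0\to M\to0$ with all $F^k$ finitely generated and free. *)

From HB Require Import structures.
From mathcomp Require Import all_boot all_order all_algebra.
Set Implicit Arguments. Unset Strict Implicit. Unset Printing Implicit Defensive.
Import GRing.Theory.
Local Open Scope ring_scope.

Definition is_Rlinear (R : pzRingType) (U V : zmodType)
  (actU : R -> U -> U) (actV : R -> V -> V) (g : U -> V) : Prop :=
  (forall x y : U, g (x + y) = g x + g y) /\
  (forall (a : R) (x : U), g (actU a x) = actV a (g x)).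

(* M (a zmodType with left R-action act) has a resolution
     ... -> R^(n 2) -> R^(n 1) -> R^(n 0) -> M -> 0
   by finitely generated free left R-modules R^(n k) = 'rV[R]_(n k)
   (with the left action (a *: v) i = a * v i). *)
Definition has_fgfree_resolution (R : pzRingType) (M : zmodType)
  (act : R -> M -> M) : Prop :=
  exists (n : nat -> nat)
         (d : forall k : nat, 'rV[R]_(n k.+1) -> 'rV[R]_(n k))
         (eps : 'rV[R]_(n 0%N) -> M),
    is_Rlinear (fun a v => a *: v) act eps /\
    (forall k, is_Rlinear (fun a v => a *: v) (fun a v => a *: v) (d k)) /\
    (forall m : M, exists x, eps x = m) /\
    (forall x, eps x = 0 <-> exists y, d 0%N y = x) /\
    (forall k x, d k x = 0 <-> exists y, d k.+1 y = x).

From mathcomp Require Import all_boot all_order all_algebra.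
From Stdlib Require Import ClassicalEpsilon.

Set Implicit Arguments. Unset Strict Implicit. Unset Printing Implicit Defensive.
Import GRing.Theory.
Local Open Scope ring_scope.

(* A submodule is of type FP_k when it is the image of a finitely generated free module
   under a map whose kernel is of type FP_(k-1) (no condition on the kernel for k = 0).
   A module has a resolution by finitely generated free modules iff it is of type FP_k for
   every k: the resolution is built one syzygy at a time, Schanuel's lemma guaranteeing
   that any cover of an FP_(k+1) module has a kernel of type FP_k.  These classes are
   closed under extensions, under quotients of an FP_(k+1) module by an FP_k submodule,
   and under kernels of maps from an FP_k module onto an FP_(k+1) module.
   Over A, the module B^n is an iterated extension of copies of B, hence of type FP_k for
   every k.  So a module of type FP_k over B is of type FP_k over A, being a quotient of
   some B^n by a kernel that is, by induction, of type FP_(k-1) over A.  Conversely,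
   induction on k shows that a module of type FP_k over A for all k is of type FP_k over B,
   since the kernel of a surjection B^n -> M is again of type FP_k over A for all k. *)

(* The annotation on [v] selects the canonical zmodType structure of ['rV_n], the one
   [lsubmx], [rsubmx] and [row_mx] are stated with. *)
Local Notation rscale n := (fun a (v : 'rV_n) => a *: v).

Definition is_range (U V : Type) (g : U -> V) (T : V -> Prop) : Prop :=
  forall v, T v <-> exists u, g u = v.

Definition is_image (U V : Type) (g : U -> V) (S : U -> Prop) (T : V -> Prop) : Prop :=
  forall v, T v <-> exists2 u, S u & g u = v.

Lemma is_range_image U V (g : U -> V) T : is_range g T -> is_image g (fun _ => True) T.
Proof. by move=> gT v; rewrite gT; split=> [[u]|[u _]]; exists u. Qed.

Lemma eq_is_image U V (g : U -> V) S T T' :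
  is_image g S T' -> (forall v, T v <-> T' v) -> is_image g S T.
Proof. by move=> gST' TT' v; rewrite TT'. Qed.

Lemma is_range_comp U V W (e : U -> V) (g : V -> W) S T :
  is_range e S -> is_image g S T -> is_range (g \o e) T.
Proof.
move=> eS gST w; rewrite gST; split=> [[v /eS[u <-] <-]|[u <-]]; first by exists u.
by exists (e u) => //; apply/eS; exists u.
Qed.

Lemma is_image_ker_comp U V (W : zmodType) (e : U -> V) (g : V -> W) (P : V -> Prop) :
  is_range e P -> is_image e (fun x => g (e x) = 0) (fun v => P v /\ g v = 0).
Proof.
move=> eP v; split=> [[/eP[x <-] gv]|[x gx <-]]; first by exists x.
by split=> //; apply/eP; exists x.
Qed.

Section Modules.
Variable R : pzRingType.

Definition lmod_action (V : zmodType) (act : R -> V -> V) : Prop :=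
  [/\ forall a u v, act a (u + v) = act a u + act a v,
      forall a b v, act (a + b) v = act a v + act b v,
      forall a b v, act a (act b v) = act (a * b) v &
      forall v, act 1 v = v].

Definition submodule (V : zmodType) (act : R -> V -> V) (P : V -> Prop) : Prop :=
  [/\ P 0, forall u v, P u -> P v -> P (u + v), forall u, P u -> P (- u) &
      forall a u, P u -> P (act a u)].

Lemma lmod_action_scale (M : lmodType R) : lmod_action (fun (a : R) (v : M) => a *: v).
Proof. by split=> *; rewrite ?scalerDr ?scalerDl ?scalerA ?scale1r. Qed.

Lemma lmod_action_row n : lmod_action (rscale n).
Proof. exact: lmod_action_scale. Qed.

Lemma submoduleT (V : zmodType) (act : R -> V -> V) : submodule act (fun _ => True).
Proof. by split. Qed.

Section Action.
Variables (V : zmodType) (act : R -> V -> V).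
Hypothesis actV : lmod_action act.

Lemma act0 a : act a 0 = 0.
Proof. by case: actV => actD _ _ _; apply/(addrI (act a 0)); rewrite -actD !addr0. Qed.

Lemma actN a v : act a (- v) = - act a v.
Proof. by case: actV => actD _ _ _; apply/(addrI (act a v)); rewrite -actD !subrr act0. Qed.

Lemma act_sum a I r (F : I -> V) :
  act a (\sum_(i <- r) F i) = \sum_(i <- r) act a (F i).
Proof. by case: actV => actD _ _ _; exact: (big_morph (act a) (actD a) (act0 a)). Qed.

Lemma Rlinear_comb m (v : 'I_m -> V) :
  is_Rlinear (rscale m) act (fun y : 'rV[R]_m => \sum_i act (y 0 i) (v i)).
Proof.
case: actV => _ actDl actA _; split=> [x y|a x].
- by rewrite -big_split; apply: eq_bigr => i _; rewrite mxE actDl.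
- by rewrite act_sum; apply: eq_bigr => i _; rewrite mxE actA.
Qed.

End Action.

Section Linear.
Variables (U V W : zmodType).
Variables (actU : R -> U -> U) (actV : R -> V -> V) (actW : R -> W -> W).

Lemma Rlinear0 g : is_Rlinear actU actV g -> g 0 = 0.
Proof. by case=> gD _; apply/(addrI (g 0)); rewrite -gD !addr0. Qed.

Lemma RlinearN g : is_Rlinear actU actV g -> forall x, g (- x) = - g x.
Proof.
move=> gL x; case: (gL) => gD _.
by apply/(addrI (g x)); rewrite -gD !subrr (Rlinear0 gL).
Qed.

Lemma RlinearB g : is_Rlinear actU actV g -> forall x y, g (x - y) = g x - g y.
Proof. by move=> gL x y; case: (gL) => gD _; rewrite gD (RlinearN gL). Qed.

Lemma Rlinear_sum g : is_Rlinear actU actV g ->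
  forall I r (F : I -> U), g (\sum_(i <- r) F i) = \sum_(i <- r) g (F i).
Proof. by move=> gL I r F; case: (gL) => gD _; exact: (big_morph g gD (Rlinear0 gL)). Qed.

Lemma Rlinear_comp g h : is_Rlinear actU actV g -> is_Rlinear actV actW h ->
  is_Rlinear actU actW (h \o g).
Proof. by case=> gD gZ [hD hZ]; split=> * /=; rewrite ?gD ?gZ ?hD ?hZ. Qed.

Hypothesis actV_lmod : lmod_action actV.

Lemma submodule_ker g : is_Rlinear actU actV g -> submodule actU (fun x => g x = 0).
Proof.
move=> gL; case: (gL) => gD gZ; split=> [|u v gu gv|u gu|a u gu].
- exact: Rlinear0 gL.
- by rewrite gD gu gv addr0.
- by rewrite (RlinearN gL) gu oppr0.
- by rewrite gZ gu act0.
Qed.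

Lemma Rlinear_cst0 : is_Rlinear actU actV (fun=> 0).
Proof. by split=> *; rewrite ?addr0 ?act0. Qed.

Lemma Rlinear_add g h : is_Rlinear actU actV g -> is_Rlinear actU actV h ->
  is_Rlinear actU actV (fun x => g x + h x).
Proof.
case: actV_lmod => actD _ _ _ [gD gZ] [hD hZ].
by split=> *; rewrite ?gD ?gZ ?hD ?hZ ?actD // addrACA.
Qed.

Lemma Rlinear_opp g : is_Rlinear actU actV g -> is_Rlinear actU actV (fun x => - g x).
Proof. by case=> gD gZ; split=> *; rewrite ?gD ?gZ ?actN // opprD. Qed.

End Linear.

Lemma linear_Rlinear m n (g : {linear 'rV[R]_m -> 'rV[R]_n}) :
  is_Rlinear (rscale m) (rscale n) g.
Proof. by split=> *; rewrite ?linearD ?linearZ. Qed.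

Lemma Rlinear_row_mx p m n (g : 'rV[R]_p -> 'rV[R]_m) (h : 'rV[R]_p -> 'rV[R]_n) :
  is_Rlinear (rscale p) (rscale m) g -> is_Rlinear (rscale p) (rscale n) h ->
  is_Rlinear (rscale p) (rscale (m + n)) (fun x => row_mx (g x) (h x)).
Proof.
by case=> gD gZ [hD hZ]; split=> *; rewrite ?gD ?gZ ?hD ?hZ ?add_row_mx ?scale_row_mx.
Qed.

Definition copair p m (V : zmodType) (r : 'rV[R]_p -> V) (s : 'rV[R]_m -> V)
  (x : 'rV[R]_(p + m)) : V :=
  r (lsubmx x) + s (rsubmx x).

Lemma copair_row_mx p m (V : zmodType) (r : 'rV[R]_p -> V) (s : 'rV[R]_m -> V) y z :
  copair r s (row_mx y z) = r y + s z.
Proof. by rewrite /copair row_mxKl row_mxKr. Qed.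

Lemma Rlinear_copair p m (V : zmodType) (act : R -> V -> V) r s :
  lmod_action act -> is_Rlinear (rscale p) act r -> is_Rlinear (rscale m) act s ->
  is_Rlinear (rscale (p + m)) act (@copair p m V r s).
Proof.
move=> actV rL sL.
exact: (Rlinear_add actV (Rlinear_comp (linear_Rlinear lsubmx) rL)
                         (Rlinear_comp (linear_Rlinear rsubmx) sL)).
Qed.

Fixpoint FP (k : nat) (V : zmodType) (act : R -> V -> V) (S : V -> Prop) : Prop :=
  exists n (e : 'rV[R]_n -> V), [/\ is_Rlinear (rscale n) act e, is_range e S &
    if k is k'.+1 then FP k' (rscale n) (fun x => e x = 0) else True].

Definition FPinf (V : zmodType) (act : R -> V -> V) (S : V -> Prop) : Prop :=
  forall k, FP k act S.

Lemma eq_FP k (V : zmodType) (act : R -> V -> V) (S S' : V -> Prop) :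
  FP k act S -> (forall v, S v <-> S' v) -> FP k act S'.
Proof.
by case: k => [|k] [n [e [eL eS FPe]]] SS'; exists n, e; split=> // v; rewrite -SS'.
Qed.

Lemma FP_trivial k (V : zmodType) (act : R -> V -> V) :
  lmod_action act -> FP k act (fun v => v = 0).
Proof.
elim: k V act => [|k IH] V act actV; exists 0%N, (fun=> 0).
all: split; [exact: Rlinear_cst0 | by move=> v; split=> [->|[_ <-]]; first exists 0 |].
  by [].
by apply: eq_FP (IH _ _ (lmod_action_row 0)) _ => x; split=> // _; exact: thinmx0.
Qed.

Lemma FP_row k n : FP k (rscale n) (fun _ => True).
Proof.
case: k => [|k]; exists n, id; split=> //; try by move=> v; split=> // _; exists v.
exact: FP_trivial (lmod_action_row _).
Qed.

Lemma FP0_image (V W : zmodType) (aV : R -> V -> V) (aW : R -> W -> W) S T (phi : V -> W) :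
  is_Rlinear aV aW phi -> is_image phi S T -> FP 0 aV S -> FP 0 aW T.
Proof.
move=> phiL phiST [n [e [eL eS _]]]; exists n, (phi \o e).
by split=> //; [exact: Rlinear_comp eL phiL | exact: is_range_comp eS phiST].
Qed.

Lemma FP_inj_image k (V W : zmodType) (aV : R -> V -> V) (aW : R -> W -> W) S T
    (phi : V -> W) :
  is_Rlinear aV aW phi -> injective phi -> is_image phi S T -> FP k aV S -> FP k aW T.
Proof.
case: k => [|k] phiL phiI phiST [n [e [eL eS FPe]]]; exists n, (phi \o e).
all: split; [exact: Rlinear_comp eL phiL | exact: is_range_comp eS phiST |].
  by [].
apply: eq_FP FPe _ => x /=; rewrite -(Rlinear0 phiL).
by split=> [->|/phiI].
Qed.

Lemma free_lift m (V W : zmodType) (aV : R -> V -> V) (aW : R -> W -> W) (P : V -> Prop)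
    (psi : V -> W) (q : 'rV[R]_m -> W) :
  lmod_action aV -> submodule aV P -> is_Rlinear aV aW psi -> is_Rlinear (rscale m) aW q ->
  (forall y, exists2 v, P v & psi v = q y) ->
  exists s : 'rV[R]_m -> V,
    [/\ is_Rlinear (rscale m) aV s, forall y, P (s y) & forall y, psi (s y) = q y].
Proof.
move=> actV [P0 PD _ PZ] psiL qL liftq.
have [v Pv psiv] := fin_all_exists2 (fun i => liftq (delta_mx 0 i)).
exists (fun y => \sum_i aV (y 0 i) (v i)); split; first exact: Rlinear_comb.
  by move=> y; apply: big_ind => // i _; exact: PZ.
move=> y; rewrite (Rlinear_sum psiL) {2}(row_sum_delta y) (Rlinear_sum qL).
by apply: eq_bigr => i _; case: psiL qL => _ psiZ [_ qZ]; rewrite psiZ psiv qZ.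
Qed.

Lemma cover_lift n1 n2 (V : zmodType) (act : R -> V -> V) (S : V -> Prop)
    (e1 : 'rV[R]_n1 -> V) (e2 : 'rV[R]_n2 -> V) :
  is_Rlinear (rscale n1) act e1 -> is_range e1 S -> is_Rlinear (rscale n2) act e2 ->
  is_range e2 S ->
  exists2 g : 'rV[R]_n1 -> 'rV[R]_n2, is_Rlinear (rscale n1) (rscale n2) g &
    forall y, e2 (g y) = e1 y.
Proof.
move=> e1L e1S e2L e2S.
have [|g [gL _ e2g]] := free_lift (lmod_action_row _) (submoduleT _) e2L e1L.
  move=> y; have /e2S[v e2v] : S (e1 y) by apply/e1S; exists y.
  by exists v.
by exists g.
Qed.

Lemma is_image_rsubmx_ker_copair p m (V : zmodType) (r : 'rV[R]_p -> V)
    (s : 'rV[R]_m -> V) :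
  is_image rsubmx (fun x => copair r s x = 0) (fun y => exists z, r z + s y = 0).
Proof.
move=> y; split=> [[z rsz]|[x rsx <-]]; last by exists (lsubmx x).
by exists (row_mx z y); rewrite ?copair_row_mx ?row_mxKr.
Qed.

Lemma FP_ker_copair_rsubmx k p m (V : zmodType) (act : R -> V -> V)
    (r : 'rV[R]_p -> V) (s : 'rV[R]_m -> V) :
  is_Rlinear (rscale m) act s -> FP k (rscale p) (fun z => r z = 0) ->
  FP k (rscale (p + m)) (fun x => copair r s x = 0 /\ rsubmx x = 0).
Proof.
move=> sL; apply: FP_inj_image (fun z => row_mx z 0) _ _ _.
- exact: Rlinear_row_mx _ (Rlinear_cst0 _ (lmod_action_row _)).
- by move=> z z' /eq_row_mx[].
- move=> x; split=> [[rs0 x2]|[z rz <-]].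
    exists (lsubmx x); last by rewrite -x2 hsubmxK.
    by move: rs0; rewrite /copair x2 (Rlinear0 sL) addr0.
  by rewrite copair_row_mx (Rlinear0 sL) addr0 row_mxKr.
Qed.

Lemma extension_cover p m (V W : zmodType) (aV : R -> V -> V) (aW : R -> W -> W)
    (P : V -> Prop) (Q : W -> Prop) (psi : V -> W)
    (r : 'rV[R]_p -> V) (q : 'rV[R]_m -> W) :
  lmod_action aV -> submodule aV P -> is_Rlinear aV aW psi -> is_image psi P Q ->
  is_Rlinear (rscale p) aV r -> is_range r (fun v => P v /\ psi v = 0) ->
  is_Rlinear (rscale m) aW q -> is_range q Q ->
  exists s : 'rV[R]_m -> V, [/\ is_Rlinear (rscale m) aV s, forall y, P (s y),
    forall y, psi (s y) = q y & is_range (copair r s) P].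
Proof.
move=> actV subP psiL psiPQ rL rK qL qQ.
have [|s [sL sP psis]] := free_lift actV subP psiL qL.
  by move=> y; apply/psiPQ/qQ; exists y.
exists s; split=> // v; case: subP => _ PD PN _; split=> [Pv|[x <-]].
- have /qQ[y qy] : Q (psi v) by apply/psiPQ; exists v.
  have /rK[z rz] : P (v - s y) /\ psi (v - s y) = 0.
    by split; [exact: PD Pv (PN _ (sP y)) | rewrite (RlinearB psiL) psis qy subrr].
  by exists (row_mx z y); rewrite copair_row_mx rz subrK.
- have [Pr _] : P (r (lsubmx x)) /\ psi (r (lsubmx x)) = 0 by apply/rK; exists (lsubmx x).
  exact: PD Pr (sP _).
Qed.

Lemma FP_extension k (V W : zmodType) (aV : R -> V -> V) (aW : R -> W -> W)
    (P : V -> Prop) (Q : W -> Prop) (psi : V -> W) :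
  lmod_action aV -> submodule aV P -> is_Rlinear aV aW psi -> is_image psi P Q ->
  FP k aV (fun v => P v /\ psi v = 0) -> FP k aW Q -> FP k aV P.
Proof.
elim: k V W aV aW P Q psi => [|k IH] V W aV aW P Q psi actV subP psiL psiPQ
    [p [r [rL rK FPr]]] [m [q [qL qQ FPq]]];
  have [s [sL sP psis sK]] := extension_cover actV subP psiL psiPQ rL rK qL qQ;
  exists (p + m)%N, (copair r s); (split=> //; first exact: Rlinear_copair actV rL sL).
apply: (IH _ _ _ _ _ (fun y => q y = 0) rsubmx (lmod_action_row _) _ _ _ _ FPq).
- exact: (submodule_ker actV (Rlinear_copair actV rL sL)).
- exact: linear_Rlinear.
- apply: eq_is_image (is_image_rsubmx_ker_copair r s) _ => y; split=> [qy0|[z rsz]].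
    have /rK[z rz] : P (s y) /\ psi (s y) = 0 by rewrite psis.
    by exists (- z); rewrite (RlinearN rL) rz addNr.
  have [_ psir] : P (r z) /\ psi (r z) = 0 by apply/rK; exists z.
  by move: (congr1 psi rsz); rewrite (proj1 psiL) psir add0r psis (Rlinear0 psiL).
- exact: FP_ker_copair_rsubmx sL FPr.
Qed.

Lemma FP_quotient k (V W : zmodType) (aV : R -> V -> V) (aW : R -> W -> W)
    (S : V -> Prop) (T : W -> Prop) (phi : V -> W) :
  lmod_action aW -> is_Rlinear aV aW phi -> is_image phi S T ->
  FP k aV (fun v => S v /\ phi v = 0) -> FP k.+1 aV S -> FP k.+1 aW T.
Proof.
move=> actW phiL phiST FPker [n [e [eL eS FPe]]]; exists n, (phi \o e).
split; [exact: Rlinear_comp eL phiL | exact: is_range_comp eS phiST |].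
apply: FP_extension (lmod_action_row _) (submodule_ker actW (Rlinear_comp eL phiL))
  eL _ _ FPker; first exact: is_image_ker_comp.
by apply: eq_FP FPe _ => x; split=> [ex0|[]//]; rewrite /= ex0 (Rlinear0 phiL).
Qed.

Lemma FP_ker_copair k n1 n2 (V : zmodType) (act : R -> V -> V)
    (e1 : 'rV[R]_n1 -> V) (e2 : 'rV[R]_n2 -> V) (h : 'rV[R]_n2 -> 'rV[R]_n1) :
  lmod_action act -> is_Rlinear (rscale n1) act e1 -> is_Rlinear (rscale n2) act e2 ->
  (forall y, e1 (h y) = e2 y) -> FP k (rscale n1) (fun z => e1 z = 0) ->
  FP k (rscale (n1 + n2)) (fun x => copair e1 e2 x = 0).
Proof.
move=> actV e1L e2L e1h FPe1.
apply: FP_extension (lmod_action_row _) _ (linear_Rlinear rsubmx) _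
  (FP_ker_copair_rsubmx e2L FPe1) (FP_row k n2).
- exact: (submodule_ker actV (Rlinear_copair actV e1L e2L)).
- apply: eq_is_image (is_image_rsubmx_ker_copair e1 e2) _ => y; split=> // _.
  by exists (- h y); rewrite (RlinearN e1L) e1h addNr.
Qed.

(* Schanuel's lemma, through the pullback of [e2] and a cover [e1] with FP_k kernel. *)
Lemma FP_ker_cover k n2 (V : zmodType) (act : R -> V -> V) (S : V -> Prop)
    (e2 : 'rV[R]_n2 -> V) :
  lmod_action act -> is_Rlinear (rscale n2) act e2 -> is_range e2 S ->
  FP k.+1 act S -> FP k (rscale n2) (fun y => e2 y = 0).
Proof.
move=> actV e2L e2S [n1 [e1 [e1L e1S FPe1]]].
have [h _ e1h] := cover_lift e2L e2S e1L e1S.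
have [g gL e2g] := cover_lift e1L e1S e2L e2S.
pose L x := copair e1 e2 x = 0.
have FPL : FP k (rscale (n1 + n2)) L := FP_ker_copair actV e1L e2L e1h FPe1.
pose phi := copair g idfun.
have phiL : is_Rlinear (rscale (n1 + n2)) (rscale n2) phi.
  exact: Rlinear_copair (lmod_action_row _) gL (linear_Rlinear idfun).
have phiK : is_image phi L (fun y => e2 y = 0).
  move=> y; split=> [e2y|[x Lx <-]]; last by rewrite /phi /copair (proj1 e2L) e2g.
  by exists (row_mx 0 y);
    rewrite /L /phi !copair_row_mx ?(Rlinear0 e1L) ?(Rlinear0 gL) add0r.
case: k FPL FPe1 => [|k] FPL _; first exact: FP0_image phiL phiK FPL.
apply: FP_quotient (lmod_action_row _) phiL phiK _ FPL.
apply: FP_inj_image (fun u => row_mx u (- g u)) _ _ _ (FP_row k n1).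
- exact: Rlinear_row_mx _ (Rlinear_opp (lmod_action_row _) gL).
- by move=> u u' /eq_row_mx[].
- move=> x; split=> [[_ phix]|[u _ <-]].
    exists (lsubmx x) => //; rewrite -[RHS]hsubmxK; congr row_mx.
    by apply/(addrI (g (lsubmx x))); rewrite subrr -phix.
  by rewrite /L /phi !copair_row_mx (RlinearN e2L) e2g !subrr.
Qed.

Lemma FP_kernel k (V W : zmodType) (aV : R -> V -> V) (aW : R -> W -> W)
    (P : V -> Prop) (Q : W -> Prop) (psi : V -> W) :
  lmod_action aV -> lmod_action aW -> is_Rlinear aV aW psi -> is_image psi P Q ->
  FP k aV P -> FP k.+1 aW Q -> FP k aV (fun v => P v /\ psi v = 0).
Proof.
move=> actV actW psiL psiPQ; case: k => [|k] [m [e [eL eP FPe]]] FPQ;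
  have FPker := FP_ker_cover actW (Rlinear_comp eL psiL) (is_range_comp eP psiPQ) FPQ.
  exact: (FP0_image eL (is_image_ker_comp psi eP) FPker).
apply: (FP_quotient actV eL (is_image_ker_comp psi eP) _ FPker).
by apply: eq_FP FPe _ => x; split=> [ex0|[]//]; rewrite ex0 (Rlinear0 psiL).
Qed.

Lemma resolution_FPinf (V : zmodType) (act : R -> V -> V) :
  has_fgfree_resolution act -> FPinf act (fun _ => True).
Proof.
case=> n [d [eps [epsL [dL [eps_onto [eps_ex d_ex]]]]]].
have FPd k j : FP k (rscale (n j)) (fun x => exists y, d j y = x).
  elim: k j => [|k IH] j; exists (n j.+1), (d j); (split=> //; first exact: dL).
  by apply: eq_FP (IH j.+1) _ => x; rewrite d_ex.
case=> [|k]; exists (n 0%N), eps; split=> //; try by move=> m; split=> // _; exact: eps_onto.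
by apply: eq_FP (FPd k 0%N) _ => x; rewrite eps_ex.
Qed.

Definition FPinf_cover (V : zmodType) (act : R -> V -> V) (S : V -> Prop) n
    (e : 'rV[R]_n -> V) : Prop :=
  [/\ is_Rlinear (rscale n) act e, is_range e S & FPinf (rscale n) (fun x => e x = 0)].

Lemma exists_FPinf_cover (V : zmodType) (act : R -> V -> V) (S : V -> Prop) :
  lmod_action act -> FPinf act S -> exists n (e : 'rV[R]_n -> V), FPinf_cover act S e.
Proof.
move=> actV FPS; have [n [e [eL eS _]]] := FPS 1%N.
by exists n, e; split=> // k; exact: FP_ker_cover actV eL eS (FPS k.+1).
Qed.

(* Carries the FP_∞ proof along, so that a cover of the next syzygy can be chosen at
   every step of the resolution. *)
Record FPinf_subrow := FPinfSubrow {
  subrow_dim : nat;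
  subrow_pred : 'rV[R]_subrow_dim -> Prop;
  subrow_FPinf : FPinf (rscale subrow_dim) subrow_pred }.
Arguments subrow_pred : clear implicits.

Lemma exists_syzygy_cover (N : FPinf_subrow) :
  exists c : {n : nat & 'rV[R]_n -> 'rV[R]_(subrow_dim N)},
    FPinf_cover (rscale _) (subrow_pred N) (projT2 c).
Proof.
have [n [e eC]] := exists_FPinf_cover (lmod_action_row _) (subrow_FPinf N).
by exists (existT _ n e).
Qed.

Definition syzygy_cover (N : FPinf_subrow) :=
  sval (constructive_indefinite_description _ (exists_syzygy_cover N)).

Lemma syzygy_coverP (N : FPinf_subrow) :
  FPinf_cover (rscale _) (subrow_pred N) (projT2 (syzygy_cover N)).
Proof. exact: proj2_sig (constructive_indefinite_description _ (exists_syzygy_cover N)). Qed.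

Lemma syzygy_FPinf (N : FPinf_subrow) :
  FPinf (rscale _) (fun x => projT2 (syzygy_cover N) x = 0).
Proof. by case: (syzygy_coverP N). Qed.

Definition syzygy (N : FPinf_subrow) : FPinf_subrow := FPinfSubrow (syzygy_FPinf N).

Lemma FPinf_resolution (V : zmodType) (act : R -> V -> V) :
  lmod_action act -> FPinf act (fun _ => True) -> has_fgfree_resolution act.
Proof.
move=> actV FPV; have [n0 [eps [epsL epsV FPker]]] := exists_FPinf_cover actV FPV.
pose N k := iter k syzygy (FPinfSubrow FPker).
exists (fun k => subrow_dim (N k)), (fun k => projT2 (syzygy_cover (N k))), eps.
split=> //; split=> [k|]; first by case: (syzygy_coverP (N k)).
split=> [m|]; first exact/epsV.
split=> [x|k x]; first by case: (syzygy_coverP (N 0%N)) => _ d0 _; exact: d0.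
by case: (syzygy_coverP (N k.+1)) => _ dk _; exact: dk.
Qed.

End Modules.

Section RestrictionOfScalars.
Variables (A B : pzRingType) (f : {rmorphism A -> B}).

Local Notation restrict act := (fun (a : A) v => act (f a) v).
Local Notation rscaleA n := (fun (a : A) (v : 'rV[B]_n) => f a *: v).

Lemma lmod_action_restrict (V : zmodType) (act : B -> V -> V) :
  lmod_action act -> lmod_action (restrict act).
Proof.
case=> actD actDl actA act1.
by split=> *; rewrite ?actD ?rmorphD ?actDl ?actA ?rmorphM ?rmorph1 ?act1.
Qed.

Lemma Rlinear_restrict (U V : zmodType) (actU : B -> U -> U) (actV : B -> V -> V) g :
  is_Rlinear actU actV g -> is_Rlinear (restrict actU) (restrict actV) g.
Proof. by case=> gD gZ; split=> *; rewrite ?gD ?gZ. Qed.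

Lemma FP_restrict_row : FPinf (fun (a : A) (b : B) => f a * b) (fun _ => True) ->
  forall k n, FP k (rscaleA n) (fun _ => True).
Proof.
move=> FPB k; have actA n := lmod_action_restrict (lmod_action_row B n).
have FPB1 : FP k (rscaleA 1) (fun _ => True).
  apply: FP_inj_image (fun b : B => const_mx b : 'rV[B]_1) _ _ _ (FPB k).
  - by split=> *; apply/rowP=> i; rewrite !mxE.
  - by move=> b b' /rowP/(_ 0); rewrite !mxE.
  - by move=> v; split=> // _; exists (v 0 0) => //; apply/rowP=> i; rewrite !mxE ord1.
elim=> [|n IH].
  by apply: eq_FP (FP_trivial k (actA 0%N)) _ => v; split=> // _; exact: thinmx0.
apply: (FP_extension (actA _) (submoduleT _)
  (Rlinear_restrict (linear_Rlinear (@rsubmx B 1 1 n))) _ _ IH).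
  by move=> y; split=> // _; exists (row_mx 0 y) => //; exact: row_mxKr.
apply: FP_inj_image (fun u => row_mx u 0) _ _ _ FPB1.
- exact: Rlinear_restrict (Rlinear_row_mx (linear_Rlinear idfun)
                                          (Rlinear_cst0 _ (lmod_action_row _ _))).
- by move=> u u' /eq_row_mx[].
- move=> x; split=> [[_ x2]|[u _ <-]]; last by split=> //; exact: row_mxKr.
  by exists (lsubmx x) => //; rewrite -x2 hsubmxK.
Qed.

Lemma restrict_cover m (V : zmodType) (act : B -> V -> V) (S : V -> Prop)
    (e : 'rV[A]_m -> V) :
  lmod_action act -> submodule act S -> is_Rlinear (rscale m) (restrict act) e ->
  is_range e S -> exists E : 'rV[B]_m -> V, is_Rlinear (rscale m) act E /\ is_range E S.
Proof.
move=> actV [S0 SD _ SZ] eL eS.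
exists (fun y => \sum_i act (y 0 i) (e (delta_mx 0 i))); split; first exact: Rlinear_comb.
move=> v; split=> [/eS[x <-]|[y <-]].
  exists (map_mx f x); rewrite {2}(row_sum_delta x) (Rlinear_sum eL).
  by apply: eq_bigr => i _; case: eL => _ ->; rewrite mxE.
by apply: big_ind => // i _; apply/SZ/eS; exists (delta_mx 0 i).
Qed.

Hypothesis FP_rowA : forall k n, FP k (rscaleA n) (fun _ => True).

Lemma FP_restrict k (V : zmodType) (act : B -> V -> V) (S : V -> Prop) :
  lmod_action act -> FP k act S -> FP k (restrict act) S.
Proof.
elim: k V act S => [|k IH] V act S actV [n [e [eL eS FPe]]].
  exact: FP0_image (Rlinear_restrict eL) (is_range_image eS) (FP_rowA 0 n).
apply: FP_quotient (lmod_action_restrict actV) (Rlinear_restrict eL) (is_range_image eS)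
  _ (FP_rowA k.+1 n).
by apply: eq_FP (IH _ _ _ (lmod_action_row _ _) FPe) _ => x; split=> [|[]].
Qed.

Lemma FP_of_restrict k (V : zmodType) (act : B -> V -> V) (S : V -> Prop) :
  lmod_action act -> submodule act S -> FPinf (restrict act) S -> FP k act S.
Proof.
elim: k V act S => [|k IH] V act S actV subS FPS; have [m [e [eL eS _]]] := FPS 0%N;
  have [E [EL ES]] := restrict_cover actV subS eL eS; exists m, E; split=> //.
apply: IH (lmod_action_row _ _) (submodule_ker actV EL) _ => j.
apply: eq_FP (FP_kernel (lmod_action_restrict (lmod_action_row _ _))
  (lmod_action_restrict actV) (Rlinear_restrict EL) (is_range_image ES)
  (FP_rowA j m) (FPS j.+1)) _ => x.
by split=> [[]|].
Qed.

End RestrictionOfScalars.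

Theorem lemma4p7 (A B : pzRingType) (f : {rmorphism A -> B})
  (f_inj : injective f)
  (HB : has_fgfree_resolution (fun (a : A) (b : B) => f a * b))
  (M : lmodType B) :
  has_fgfree_resolution (fun (b : B) (m : M) => b *: m) <->
  has_fgfree_resolution (fun (a : A) (m : M) => f a *: m).
Proof.
have FP_rowA := FP_restrict_row (resolution_FPinf HB).
have actM := lmod_action_scale M.
split=> /resolution_FPinf FPM; apply: FPinf_resolution.
- exact: lmod_action_restrict.
- by move=> k; exact: FP_restrict.
- exact: actM.
- by move=> k; exact: FP_of_restrict (submoduleT _) FPM.
Qed.
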